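(* Let $\nu>-1$ and $p,q\in\mathbb{R}$. Then the inequalities $$(1-p)\frac{1}{\mathcal{I}_{\nu+1}(x)}+p\frac{\mathcal{I}_{\nu}(x)}{\mathcal{I}_{\nu+1}(x)}>1>(1-q)\frac{1}{\mathcal{I}_{\nu+1}(x)}+q\frac{\mathcal{I}_{\nu}(x)}{\mathcal{I}_{\nu+1}(x)}$$ hold for all $x\in(0,\infty)$ if and only if $p\geq\frac{\nu+1}{\nu+2}$ and $q\leq 0$.
   Context: For $\mu>-1$, $I_\mu(x)=\sum_{n\geq0}\frac{(x/2)^{\mu+2n}}{n!\,\Gamma(\mu+n+1)}$ is the modified Bessel function of the first kind, and $\mathcal{I}_\mu:\mathbb{R}\to[1,\infty)$ is the normalized modified Bessel function $$\mathcal{I}_{\mu}(x)=2^{\mu}\Gamma(\mu+1)x^{-\mu}I_{\mu}(x)=\sum_{n\geq0}\frac{(1/4)^n}{(\mu+1)_n\, n!}x^{2n},$$ where $(\mu+1)_n=\Gamma(\mu+n+1)/\Gamma(\mu+1)$ is the Pochhammer symbol. In particular $\mathcal{I}_{-1/2}(x)=\cosh x$ and $\mathcal{I}_{1/2}(x)=\frac{\sinh x}{x}$. *)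

From Stdlib Require Import Reals Factorial ClassicalEpsilon.
Open Scope R_scope.

Fixpoint poch (a : R) (n : nat) : R :=
  match n with
  | O => 1
  | S k => poch a k * (a + INR k)
  end.

Definition nbessel_term (mu x : R) (n : nat) : R :=
  (/ 4) ^ n / (poch (mu + 1) n * INR (fact n)) * x ^ (2 * n).

(* Normalized modified Bessel function I_mu(x) = sum_{n>=0} nbessel_term mu x n
   (the series converges for every real x when mu > -1; the value is chosen
   as the sum of the series). *)
Definition nbessel (mu x : R) : R :=
  epsilon (inhabits 0) (fun l => infinite_sum (nbessel_term mu x) l).

(* Put y = x^2, A = sum_n a_n y^n (the series of I_nu) and B = sum_n b_n y^n (that of
   I_(nu+1)).  The two inequalities read p (A - 1) > B - 1 > q (A - 1).  Since
   b_n = c_n a_n with c_n = (nu+1)/(nu+1+n) strictly decreasing from c_1 = (nu+1)/(nu+2)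
   to 0, the ratio (B - 1)/(A - 1) lies strictly between 0 and c_1, tends to c_1 as
   y -> 0 (the degree-one terms dominate) and to 0 as y -> oo (the coefficients of
   q A - B are eventually positive, so this series is unbounded above). *)

From Stdlib Require Import Reals Factorial Lra Lia ClassicalEpsilon.
From Coquelicot Require Import Coquelicot.
Open Scope R_scope.

Lemma Series_nonneg (u : nat -> R) :
  ex_series u -> (forall n, 0 <= u n) -> 0 <= Series u.
Proof.
  intros Hu Hpos.
  assert (Hle : Series (fun n => 0 * u n) <= Series u).
  { apply Series_le; [|exact Hu]. intro n; specialize (Hpos n); lra. }
  rewrite Series_scal_l in Hle; lra.
Qed.

Lemma sum_f_R0_ge_term (u : nat -> R) k :
  (forall n, 0 <= u n) -> u k <= sum_f_R0 u k.
Proof.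
  intro Hpos; destruct k as [|k]; simpl; [lra|].
  pose proof (cond_pos_sum u k Hpos); lra.
Qed.

Lemma Series_pos_of_term (u : nat -> R) k :
  ex_series u -> (forall n, 0 <= u n) -> 0 < u k -> 0 < Series u.
Proof.
  intros Hu Hpos Hk.
  rewrite (Series_incr_n u (S k)) by (auto with arith); simpl pred.
  assert (Htail : 0 <= Series (fun j => u (S k + j)%nat)).
  { apply Series_nonneg; [now apply ex_series_incr_n | auto]. }
  pose proof (sum_f_R0_ge_term u k Hpos); lra.
Qed.

Lemma ex_series_of_CV_disk (a : nat -> R) y :
  CV_disk a y -> ex_series (fun n => a n * y ^ n).
Proof. apply ex_series_Rabs. Qed.

Lemma PSeries_gt_head (a : nat -> R) k y :
  CV_disk a y -> 0 < y -> (forall n, (0 < n)%nat -> 0 <= a n) ->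
  (0 < k)%nat -> 0 < a k -> a 0%nat < PSeries a y.
Proof.
  intros Hcv Hy Hpos Hk Hak.
  unfold PSeries; rewrite Series_incr_1 by now apply ex_series_of_CV_disk.
  destruct k as [|k]; [inversion Hk|].
  assert (Htail : 0 < Series (fun j => a (S j) * y ^ S j)).
  { apply Series_pos_of_term with k.
    - now apply (ex_series_incr_1 (fun n => a n * y ^ n)), ex_series_of_CV_disk.
    - intro j; apply Rmult_le_pos; [apply Hpos; auto with arith | apply pow_le; lra].
    - apply Rmult_lt_0_compat; [exact Hak | apply pow_lt; lra]. }
  rewrite pow_O; lra.
Qed.

Lemma PSeries_lt_head_near_0 (a : nat -> R) :
  CV_disk a 1 -> a 1%nat < 0 -> exists y, 0 < y /\ PSeries a y < a 0%nat.
Proof.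
  intros Hcv Ha1.
  assert (HK : ex_series (fun k => Rabs (a (S (S k))))).
  { apply (ex_series_incr_n (fun n => Rabs (a n)) 2).
    apply (ex_series_ext (fun n => Rabs (a n * 1 ^ n))); [|exact Hcv].
    intro n; now rewrite pow1, Rmult_1_r. }
  set (K := Series (fun k => Rabs (a (S (S k))))).
  assert (HK0 : 0 <= K) by (apply Series_nonneg; [exact HK | intro; apply Rabs_pos]).
  set (y := Rmin 1 (- a 1%nat / (K + 1))).
  assert (Hy0 : 0 < y) by (apply Rmin_glb_lt; [lra | apply Rdiv_lt_0_compat; lra]).
  assert (Hy1 : y <= 1) by apply Rmin_l.
  assert (Hcvy : CV_disk a y)
    by (apply (CV_disk_le a y 1); [rewrite !Rabs_pos_eq; lra | exact Hcv]).
  assert (HyK : y * K < - a 1%nat).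
  { assert (y * (K + 1) <= - a 1%nat).
    { assert (Hy2 : y <= - a 1%nat / (K + 1)) by apply Rmin_r.
      apply Rmult_le_compat_r with (r := K + 1) in Hy2; [|lra].
      unfold Rdiv in Hy2; rewrite Rmult_assoc, Rinv_l in Hy2; lra. }
    nra. }
  assert (Htail : Series (fun k => a (S (S k)) * y ^ S (S k)) <= y ^ 2 * K).
  { eapply Rle_trans; [apply Rle_abs|]. eapply Rle_trans; [apply Series_Rabs|].
    - now apply (ex_series_incr_n (fun n => Rabs (a n * y ^ n)) 2).
    - unfold K; rewrite <- Series_scal_l; apply Series_le; [|exact (ex_series_scal_l _ _ HK)].
      intro k; split; [apply Rabs_pos|].
      rewrite Rabs_mult, (Rabs_pos_eq (y ^ _)) by (apply pow_le; lra).
      replace (y ^ S (S k)) with (y ^ 2 * y ^ k) by (simpl; ring).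
      assert (0 <= y ^ k <= 1)
        by (split; [apply pow_le; lra | rewrite <- (pow1 k); apply pow_incr; lra]).
      assert (y ^ 2 * y ^ k <= y ^ 2) by (pose proof (pow_le y 2 ltac:(lra)); nra).
      pose proof (Rabs_pos (a (S (S k)))); nra. }
  exists y; split; [exact Hy0|].
  unfold PSeries.
  rewrite Series_incr_1 by now apply ex_series_of_CV_disk.
  rewrite Series_incr_1 by now apply (ex_series_incr_1 (fun n => a n * y ^ n)), ex_series_of_CV_disk.
  simpl pow in *. nra.
Qed.

Lemma sum_f_R0_pow_ge (a : nat -> R) N y :
  1 <= y -> - (sum_f_R0 (fun n => Rabs (a n)) N * y ^ N) <= sum_f_R0 (fun n => a n * y ^ n) N.
Proof.
  intro Hy.
  assert (Hsum : sum_f_R0 (fun n => Rabs (a n * y ^ n)) N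
                 <= sum_f_R0 (fun n => Rabs (a n)) N * y ^ N).
  { rewrite Rmult_comm, scal_sum; apply sum_Rle; intros n Hn.
    rewrite Rabs_mult, (Rabs_pos_eq (y ^ n)) by (apply pow_le; lra).
    apply Rmult_le_compat_l; [apply Rabs_pos|].
    replace N with (n + (N - n))%nat by lia; rewrite pow_add.
    pose proof (pow_R1_Rle y (N - n) Hy); pose proof (pow_le y n ltac:(lra)); nra. }
  pose proof (sum_f_R0_triangle (fun n => a n * y ^ n) N).
  pose proof (Rle_abs (- sum_f_R0 (fun n => a n * y ^ n) N)) as Hneg.
  rewrite Rabs_Ropp in Hneg; lra.
Qed.

Lemma PSeries_unbounded_above (a : nat -> R) N :
  (forall y, CV_disk a y) -> (forall n, (N < n)%nat -> 0 <= a n) -> 0 < a (S N) ->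
  forall L, exists y, 0 < y /\ L < PSeries a y.
Proof.
  intros Hcv Hpos HaN L.
  set (S0 := sum_f_R0 (fun n => Rabs (a n)) N).
  assert (HS0 : 0 <= S0) by (apply cond_pos_sum; intro; apply Rabs_pos).
  set (y := 1 + (S0 + Rabs L) / a (S N)).
  assert (Hy1 : 1 <= y).
  { assert (0 <= (S0 + Rabs L) / a (S N))
      by (apply Rdiv_le_0_compat; [pose proof (Rabs_pos L) | ]; lra).
    unfold y; lra. }
  assert (Hlead : a (S N) * y - S0 = a (S N) + Rabs L) by (unfold y; field; lra).
  assert (Hex : ex_series (fun n => a n * y ^ n)) by apply ex_series_of_CV_disk, Hcv.
  assert (Htail : a (S N) * y ^ S N <= Series (fun k => a (S N + k)%nat * y ^ (S N + k))).
  { rewrite Series_incr_1 by now apply (ex_series_incr_n (fun n => a n * y ^ n)).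
    rewrite Nat.add_0_r.
    assert (0 <= Series (fun k => a (S N + S k)%nat * y ^ (S N + S k))); [|lra].
    apply Series_nonneg.
    - apply (ex_series_incr_1 (fun k => a (S N + k)%nat * y ^ (S N + k))).
      now apply (ex_series_incr_n (fun n => a n * y ^ n)).
    - intro k; apply Rmult_le_pos; [apply Hpos; lia | apply pow_le; lra]. }
  exists y; split; [lra|].
  unfold PSeries; rewrite (Series_incr_n _ (S N)) by (auto with arith); simpl pred.
  pose proof (sum_f_R0_pow_ge a N y Hy1) as Hhead; fold S0 in Hhead.
  pose proof (pow_R1_Rle y N Hy1); pose proof (Rle_abs L); pose proof (Rabs_pos L).
  replace (a (S N) * y ^ S N) with (y ^ N * (a (S N) * y - S0) + S0 * y ^ N) in Htail
    by (simpl; ring).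
  assert (y ^ N * (a (S N) * y - S0) >= a (S N) * y - S0) by nra.
  lra.
Qed.

Lemma poch_pos (a : R) n : 0 < a -> 0 < poch a n.
Proof.
  intro Ha; induction n as [|n IH]; simpl; [lra|].
  apply Rmult_lt_0_compat; [exact IH | pose proof (pos_INR n); lra].
Qed.

Lemma poch_shift (a : R) n : a * poch (a + 1) n = poch a n * (a + INR n).
Proof.
  induction n as [|n IH]; simpl poch; [simpl; ring|].
  rewrite S_INR, <- Rmult_assoc, IH; ring.
Qed.

Definition bessel_coef (mu : R) (n : nat) : R :=
  (/ 4) ^ n / (poch (mu + 1) n * INR (fact n)).

Lemma nbessel_term_coef (mu x : R) n : nbessel_term mu x n = bessel_coef mu n * (x ^ 2) ^ n.
Proof. unfold nbessel_term, bessel_coef; now rewrite pow_mult. Qed.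

Lemma bessel_coef_0 (mu : R) : bessel_coef mu 0 = 1.
Proof. unfold bessel_coef; simpl; field. Qed.

Lemma bessel_coef_pos (mu : R) n : -1 < mu -> 0 < bessel_coef mu n.
Proof.
  intro Hmu; unfold bessel_coef; apply Rdiv_lt_0_compat; [apply pow_lt; lra|].
  apply Rmult_lt_0_compat; [apply poch_pos; lra | apply lt_0_INR, lt_O_fact].
Qed.

Lemma bessel_coef_ratio (mu : R) n : -1 < mu ->
  bessel_coef mu (S n) / bessel_coef mu n = / (4 * ((mu + 1 + INR n) * INR (S n))).
Proof.
  intro Hmu; unfold bessel_coef; simpl poch; rewrite fact_simpl, mult_INR, S_INR.
  pose proof (poch_pos (mu + 1) n ltac:(lra)); pose proof (lt_0_INR _ (lt_O_fact n)).
  pose proof (pos_INR n); simpl pow.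
  field; repeat split; try lra; apply pow_nonzero; lra.
Qed.

Lemma bessel_coef_succ_order (nu : R) n : -1 < nu ->
  bessel_coef (nu + 1) n = (nu + 1) / (nu + 1 + INR n) * bessel_coef nu n.
Proof.
  intro Hnu; unfold bessel_coef.
  pose proof (poch_shift (nu + 1) n) as Hshift.
  pose proof (poch_pos (nu + 1) n ltac:(lra)); pose proof (poch_pos (nu + 1 + 1) n ltac:(lra)).
  pose proof (lt_0_INR _ (lt_O_fact n)); pose proof (pos_INR n).
  replace (poch (nu + 1 + 1) n) with (poch (nu + 1) n * (nu + 1 + INR n) / (nu + 1))
    by (rewrite <- Hshift; field; lra).
  field; repeat split; lra.
Qed.

Lemma bessel_coef_CV_disk (mu y : R) : -1 < mu -> CV_disk (bessel_coef mu) y.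
Proof.
  intro Hmu; apply CV_disk_DAlembert with 0; [| |now left].
  { intro n; apply Rgt_not_eq, bessel_coef_pos, Hmu. }
  apply (is_lim_seq_ext (fun n => / (4 * ((mu + 1 + INR n) * INR (S n))))).
  { intro n; rewrite bessel_coef_ratio by exact Hmu.
    symmetry; apply Rabs_pos_eq, Rlt_le, Rinv_0_lt_compat.
    rewrite S_INR; pose proof (pos_INR n); nra. }
  replace (Finite 0) with (Rbar_inv p_infty) by reflexivity.
  apply is_lim_seq_inv; [|discriminate].
  apply is_lim_seq_le_p_loc with INR; [|apply is_lim_seq_INR].
  exists 0%nat; intros n _; rewrite S_INR; pose proof (pos_INR n); nra.
Qed.

Lemma nbessel_PSeries (mu x : R) : -1 < mu -> nbessel mu x = PSeries (bessel_coef mu) (x ^ 2).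
Proof.
  intro Hmu.
  assert (Hsum : infinite_sum (nbessel_term mu x) (PSeries (bessel_coef mu) (x ^ 2))).
  { apply is_series_Reals, (is_series_ext (fun n => bessel_coef mu n * (x ^ 2) ^ n)).
    - intro n; now rewrite nbessel_term_coef.
    - apply Series_correct, ex_series_of_CV_disk, bessel_coef_CV_disk, Hmu. }
  unfold nbessel.
  pose proof (epsilon_spec (inhabits 0) _ (ex_intro _ _ Hsum)) as Hspec.
  apply is_series_Reals, is_series_unique in Hspec.
  apply is_series_Reals, is_series_unique in Hsum.
  rewrite <- Hsum; exact (eq_sym Hspec).
Qed.

Lemma PSeries_bessel_coef_gt1 mu y : -1 < mu -> 0 < y -> 1 < PSeries (bessel_coef mu) y.
Proof.
  intros Hmu Hy; rewrite <- (bessel_coef_0 mu).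
  apply PSeries_gt_head with 1%nat; auto using bessel_coef_CV_disk.
  intros n _; apply Rlt_le, bessel_coef_pos, Hmu.
  apply bessel_coef_pos, Hmu.
Qed.

Definition bessel_gap (nu c : R) (n : nat) : R :=
  c * bessel_coef nu n - bessel_coef (nu + 1) n.

Section BesselGap.
Variable nu : R.
Hypothesis Hnu : -1 < nu.

Lemma bessel_gap_factor c n :
  bessel_gap nu c n = (c - (nu + 1) / (nu + 1 + INR n)) * bessel_coef nu n.
Proof. unfold bessel_gap; rewrite bessel_coef_succ_order by exact Hnu; ring. Qed.

Lemma bessel_gap_0 c : bessel_gap nu c 0 = c - 1.
Proof. unfold bessel_gap; rewrite !bessel_coef_0; ring. Qed.

Lemma bessel_gap_CV_disk c y : CV_disk (bessel_gap nu c) y.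
Proof.
  pose proof (bessel_coef_CV_disk nu y Hnu) as Ha.
  pose proof (bessel_coef_CV_disk (nu + 1) y ltac:(lra)) as Hb.
  apply (@ex_series_le R_AbsRing R_CompleteNormedModule _
           (fun n => Rabs c * Rabs (bessel_coef nu n * y ^ n) + Rabs (bessel_coef (nu + 1) n * y ^ n))).
  - intro n; change (norm ?z) with (Rabs z); rewrite Rabs_Rabsolu.
    unfold bessel_gap; rewrite Rmult_minus_distr_r, Rmult_assoc, <- (Rabs_mult c).
    eapply Rle_trans; [apply Rabs_triang|]; rewrite Rabs_Ropp; lra.
  - apply (ex_series_plus _ _ (ex_series_scal_l _ _ Ha) Hb).
Qed.

Lemma PSeries_bessel_gap c y :
  PSeries (bessel_gap nu c) y
  = c * PSeries (bessel_coef nu) y - PSeries (bessel_coef (nu + 1)) y.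
Proof.
  unfold PSeries; rewrite <- Series_scal_l, <- Series_minus.
  - apply Series_ext; intro n; unfold bessel_gap; ring.
  - exact (ex_series_scal_l _ _ (ex_series_of_CV_disk _ _ (bessel_coef_CV_disk nu y Hnu))).
  - apply ex_series_of_CV_disk, bessel_coef_CV_disk; lra.
Qed.

Lemma shift_factor_le n : (1 <= n)%nat -> (nu + 1) / (nu + 1 + INR n) <= (nu + 1) / (nu + 2).
Proof.
  intro Hn; apply le_INR in Hn; simpl in Hn.
  apply Rmult_le_compat_l; [lra | apply Rinv_le_contravar; lra].
Qed.

Lemma shift_factor_lt n : (2 <= n)%nat -> (nu + 1) / (nu + 1 + INR n) < (nu + 1) / (nu + 2).
Proof.
  intro Hn; apply le_INR in Hn; simpl in Hn.
  apply Rmult_lt_compat_l; [lra | apply Rinv_lt_contravar; nra].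
Qed.

Lemma PSeries_bessel_gap_sharp y :
  0 < y -> (nu + 1) / (nu + 2) - 1 < PSeries (bessel_gap nu ((nu + 1) / (nu + 2))) y.
Proof.
  intro Hy; rewrite <- bessel_gap_0.
  apply PSeries_gt_head with 2%nat; auto using bessel_gap_CV_disk.
  - intros n Hn; rewrite bessel_gap_factor; apply Rmult_le_pos.
    + pose proof (shift_factor_le n Hn); lra.
    + apply Rlt_le, bessel_coef_pos, Hnu.
  - rewrite bessel_gap_factor; apply Rmult_lt_0_compat.
    + pose proof (shift_factor_lt 2 (le_n _)); lra.
    + apply bessel_coef_pos, Hnu.
Qed.

Lemma PSeries_bessel_gap_near_0 p : p < (nu + 1) / (nu + 2) ->
  exists y, 0 < y /\ PSeries (bessel_gap nu p) y < p - 1.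
Proof.
  intro Hp; rewrite <- bessel_gap_0.
  apply PSeries_lt_head_near_0; [apply bessel_gap_CV_disk|].
  rewrite bessel_gap_factor; simpl INR.
  replace (nu + 1 + 1) with (nu + 2) by ring.
  pose proof (bessel_coef_pos nu 1 Hnu); nra.
Qed.

Lemma PSeries_bessel_gap_unbounded q : 0 < q ->
  exists y, 0 < y /\ q - 1 < PSeries (bessel_gap nu q) y.
Proof.
  intro Hq; destruct (INR_unbounded ((nu + 1) / q)) as [N HN].
  assert (Hgap : forall n, (N < n)%nat -> 0 < bessel_gap nu q n).
  { intros n Hn; apply lt_INR in Hn.
    assert (Hqn : nu + 1 < q * INR n).
    { replace (nu + 1) with (q * ((nu + 1) / q)) by (field; lra); nra. }
    rewrite bessel_gap_factor; apply Rmult_lt_0_compat; [|apply bessel_coef_pos, Hnu].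
    assert ((nu + 1) / (nu + 1 + INR n) < q); [|lra].
    pose proof (pos_INR n); apply Rmult_lt_reg_r with (nu + 1 + INR n); [lra|].
    unfold Rdiv; rewrite Rmult_assoc, Rinv_l by lra; nra. }
  rewrite <- bessel_gap_0.
  apply PSeries_unbounded_above with N; auto using bessel_gap_CV_disk.
  intros n Hn; apply Rlt_le, Hgap, Hn.
Qed.

End BesselGap.

Lemma affine_quotient_mul (A B p : R) :
  0 < B -> ((1 - p) * / B + p * (A / B)) * B = 1 + p * (A - 1).
Proof. intro HB; field; lra. Qed.

Lemma bessel_ineqs_iff_gap (nu p q x : R) : -1 < nu -> 0 < x ->
  ((1 - p) * / nbessel (nu + 1) x + p * (nbessel nu x / nbessel (nu + 1) x) > 1 /\
   1 > (1 - q) * / nbessel (nu + 1) x + q * (nbessel nu x / nbessel (nu + 1) x))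
  <-> (p - 1 < PSeries (bessel_gap nu p) (x ^ 2) /\ PSeries (bessel_gap nu q) (x ^ 2) < q - 1).
Proof.
  intros Hnu Hx.
  rewrite !nbessel_PSeries, !PSeries_bessel_gap by lra.
  set (A := PSeries (bessel_coef nu) (x ^ 2)).
  set (B := PSeries (bessel_coef (nu + 1)) (x ^ 2)).
  assert (HB : 0 < B).
  { apply Rlt_trans with 1; [lra | apply PSeries_bessel_coef_gt1; [lra | apply pow_lt, Hx]]. }
  pose proof (affine_quotient_mul A B p HB); pose proof (affine_quotient_mul A B q HB).
  split; intros [Hp Hq]; split; nra.
Qed.

Theorem theorem4p2 (nu p q : R) (hnu : -1 < nu) :
  (forall x : R, 0 < x ->
     (1 - p) * / nbessel (nu + 1) x + p * (nbessel nu x / nbessel (nu + 1) x) > 1 /\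
     1 > (1 - q) * / nbessel (nu + 1) x + q * (nbessel nu x / nbessel (nu + 1) x))
  <-> (p >= (nu + 1) / (nu + 2) /\ q <= 0).
Proof.
  assert (Hreduce : forall y, 0 < y -> exists x, 0 < x /\ x ^ 2 = y).
  { intros y Hy; exists (sqrt y); split; [apply sqrt_lt_R0, Hy | apply pow2_sqrt; lra]. }
  split.
  - intro H; split.
    + apply Rnot_lt_ge; intro Hp.
      destruct (PSeries_bessel_gap_near_0 nu hnu p Hp) as (y & Hy & Hgap).
      destruct (Hreduce y Hy) as (x & Hx & <-).
      destruct (proj1 (bessel_ineqs_iff_gap nu p q x hnu Hx) (H x Hx)); lra.
    + apply Rnot_lt_le; intro Hq.
      destruct (PSeries_bessel_gap_unbounded nu hnu q Hq) as (y & Hy & Hgap).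
      destruct (Hreduce y Hy) as (x & Hx & <-).
      destruct (proj1 (bessel_ineqs_iff_gap nu p q x hnu Hx) (H x Hx)); lra.
  - intros [Hp Hq] x Hx; apply bessel_ineqs_iff_gap; [exact hnu | exact Hx |].
    assert (Hy : 0 < x ^ 2) by (apply pow_lt, Hx).
    rewrite !PSeries_bessel_gap by exact hnu.
    pose proof (PSeries_bessel_gap_sharp nu hnu _ Hy) as Hsharp.
    rewrite PSeries_bessel_gap in Hsharp by exact hnu.
    pose proof (PSeries_bessel_coef_gt1 nu _ hnu Hy).
    pose proof (PSeries_bessel_coef_gt1 (nu + 1) _ ltac:(lra) Hy).
    split; nra.
Qed.
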